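(* Let $\mathbf{x}_{-1}=(\mathbf{x}_2,\dots,\mathbf{x}_p)$ be a zero-mean Gaussian row vector with nonsingular covariance $\Sigma_{-1,-1}$. Fix $S\subset\{2,\dots,p\}$ and $\lambda^\sharp>0$. Let $w\in\mathbb{R}^{p-1}$ have strictly positive entries with $\|w\|_\infty\le1$, let $W$ be the diagonal matrix with diagonal $w$, let $$c^0\in\arg\min\big\{\|\Sigma_{-1,-1}^{1/2}c\|_2^2:\ c\in\mathbb{R}^{p-1},\ \lambda^\sharp\|(Wc)_{-S}\|_1=1\big\},$$ and define $\zeta\in\mathbb{R}^{p-1}$ by $\zeta_j:=0$ for $j\in S$ and $\zeta_j:={\rm sign}(c^0_j)$ for $j\notin S$. Then $\mathbf{x}_{-1}c^0$ is orthogonal to (i.e. independent of) $\mathbf{x}_S$. Moreover $$\|\Sigma_{-1,-1}c^0\|_\infty=\frac{\|w_{-S}\|_\infty}{\lambda^\sharp\|\Sigma_{-1,-1}^{-1/2}W\zeta\|_2^2},\qquad \|\Sigma_{-1,-1}^{1/2}c^0\|_2^2=\frac{1}{\lambda^{\sharp2}\|\Sigma_{-1,-1}^{-1/2}W\zeta\|_2^2}.$$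
   Context: Vectors in $\mathbb{R}^{p-1}$ are indexed by $\{2,\dots,p\}$; for $S\subset\{2,\dots,p\}$, $-S:=\{2,\dots,p\}\setminus S$ and $v_{-S}$ denotes the vector $v$ with entries in $S$ set to zero (or the corresponding subvector). $\mathbf{x}_S=\{\mathbf{x}_j\}_{j\in S}$. *)

From mathcomp Require Import all_boot all_order all_algebra.
From mathcomp Require Import reals.
Set Implicit Arguments. Unset Strict Implicit. Unset Printing Implicit Defensive.
Import Order.TTheory GRing.Theory Num.Theory.
Local Open Scope ring_scope.

(* Coordinates {2,...,p} are re-indexed as 'I_n with n = p - 1. *)

(* Quadratic form v^T A v.  For A = Sigma (symmetric positive definite),
   quad Sigma c = ||Sigma^{1/2} c||_2^2 and quad (invmx Sigma) v = ||Sigma^{-1/2} v||_2^2. *)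
Definition quad (R : realType) (n : nat) (A : 'M[R]_n) (v : 'cV[R]_n) : R :=
  (v^T *m A *m v) 0 0.

Definition linf (R : realType) (n : nat) (v : 'cV[R]_n) : R :=
  \big[Num.max/0]_(j < n) `|v j 0|.

Definition linf_out (R : realType) (n : nat) (S : {set 'I_n}) (v : 'cV[R]_n) : R :=
  \big[Num.max/0]_(j < n | j \notin S) `|v j 0|.

Definition l1_out (R : realType) (n : nat) (S : {set 'I_n}) (v : 'cV[R]_n) : R :=
  \sum_(j < n | j \notin S) `|v j 0|.

Definition posdef (R : realType) (n : nat) (Sigma : 'M[R]_n) : Prop :=
  Sigma^T = Sigma /\ forall v : 'cV[R]_n, v != 0 -> 0 < quad Sigma v.

Definition is_argmin_c0 (R : realType) (n : nat) (Sigma W : 'M[R]_n)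
    (S : {set 'I_n}) (lam : R) (c0 : 'cV[R]_n) : Prop :=
  lam * l1_out S (W *m c0) = 1 /\
  forall c : 'cV[R]_n, lam * l1_out S (W *m c) = 1 -> quad Sigma c0 <= quad Sigma c.

Definition zeta_of (R : realType) (n : nat) (S : {set 'I_n}) (c0 : 'cV[R]_n) : 'cV[R]_n :=
  \col_(j < n) (if j \in S then 0 else Num.sg (c0 j 0)).

(* Covariance of the scalar x_{-1} c with the coordinate x_j for a zero-mean
   vector with covariance Sigma: E[(x c) x_j] = (Sigma c)_j. *)
Definition cov_lin_coord (R : realType) (n : nat) (Sigma : 'M[R]_n) (c : 'cV[R]_n) (j : 'I_n) : R :=
  (Sigma *m c) j 0.

From mathcomp Require Import all_boot all_order all_algebra.
From mathcomp Require Import reals.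
From mathcomp Require Import ring lra.
Set Implicit Arguments. Unset Strict Implicit. Unset Printing Implicit Defensive.
Import Order.TTheory GRing.Theory Num.Theory.
Local Open Scope ring_scope.

(* Write Q(c) = c^T Sigma c and N(c) = ||(W c)_{-S}||_1.  By homogeneity, the
   minimality of c0 on {lam N = 1} says Q(c) >= lam^2 Q(c0) N(c)^2 for every c.
   If s vanishes on S, |s| <= 1 and s_j c0_j = |c0_j| off S, the linear form
   c |-> (W s)^T c is dominated by N and agrees with it at c0, so the quadratic
   form Q(c) - lam^2 Q(c0) ((W s)^T c)^2 is nonnegative and vanishes at c0;
   hence c0 lies in its kernel: Sigma c0 = lam Q(c0) W s.  With s = zeta this
   vanishes on S, and since s is free at the zero coordinates of c0 off S,
   there are none.  Both identities then follow from
   ||Sigma^{-1/2} W zeta||^2 = Q(c0) / (lam Q(c0))^2. *)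

Section QuadraticForm.
Variables (R : realType) (n : nat).
Implicit Types (A B : 'M[R]_n) (v x y : 'cV[R]_n).

Lemma quadZ A a x : quad A (a *: x) = a ^+ 2 * quad A x.
Proof.
by rewrite /quad [(_ *: _)^T]linearZ -!scalemxAl -scalemxAr scalerA mxE expr2.
Qed.

Lemma quadBZ_mx A B k x : quad (A - k *: B) x = quad A x - k * quad B x.
Proof. by rewrite /quad mulmxBr mulmxBl -scalemxAr -scalemxAl !mxE. Qed.

Lemma quad_outer v x : quad (v *m v^T) x = (v^T *m x) 0 0 ^+ 2.
Proof.
rewrite /quad mulmxA -mulmxA -[x^T *m v]trmxK trmx_mul trmxK.
set a := (v^T *m x) 0 0; rewrite [v^T *m x]mx11_scalar -/a.
by rewrite tr_scalar_mx -scalar_mxM mxE mulr1n expr2.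
Qed.

Lemma quad_cross_sym A x y : A^T = A ->
  (x^T *m A *m y) 0 0 = (y^T *m A *m x) 0 0.
Proof.
move=> Asym; have trE (M : 'M[R]_1) : M 0 0 = M^T 0 0 by rewrite mxE.
by rewrite [LHS]trE !trmx_mul trmxK Asym mulmxA.
Qed.

Lemma quadDZ A x y t : A^T = A ->
  quad A (x + t *: y) =
  quad A x + 2 * t * (y^T *m A *m x) 0 0 + t ^+ 2 * quad A y.
Proof.
move=> Asym; rewrite /quad.
have -> : (x + t *: y)^T = x^T + t *: y^T by rewrite linearD /= linearZ.
rewrite !mulmxDl !mulmxDr -!scalemxAl -!scalemxAr.
have addE (M N : 'M[R]_1) : (M + N) 0 0 = M 0 0 + N 0 0 by rewrite mxE.
have scaleE a (M : 'M[R]_1) : (a *: M) 0 0 = a * M 0 0 by rewrite mxE.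
rewrite !addE !scaleE [(x^T *m _ *m y) 0 0]quad_cross_sym //; ring.
Qed.

Lemma delta_quad_cross A x j :
  ((delta_mx j 0 : 'cV[R]_n)^T *m A *m x) 0 0 = (A *m x) j 0.
Proof. by rewrite trmx_delta -mulmxA -rowE mxE. Qed.

Lemma lin_coef_eq0_of_ge0 (a b : R) :
  (forall t, 0 <= 2 * t * b + t ^+ 2 * a) -> b = 0.
Proof.
move=> ge0; apply/eqP; rewrite -sqrf_eq0 eq_le sqr_ge0 andbT.
have [a_le0 | a_gt0] := lerP a 0.
  by have := ge0 (- b); nra.
have := ge0 (- b / a); set t := - b / a.
have ta : t * a = - b by rewrite mulfVK // gt_eqF.
nra.
Qed.

Lemma psd_quad_eq0_mulmx A x : A^T = A -> (forall y, 0 <= quad A y) ->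
  quad A x = 0 -> A *m x = 0.
Proof.
move=> Asym psd qx0; apply/matrixP => j k; rewrite (ord1 k) [RHS]mxE.
apply: (@lin_coef_eq0_of_ge0 (quad A (delta_mx j 0))) => t.
have := psd (x + t *: delta_mx j 0).
by rewrite quadDZ // qx0 add0r delta_quad_cross.
Qed.

Lemma quad_ge_sqr_dot_mulmx A v x k : A^T = A ->
  (forall y, k * (v^T *m y) 0 0 ^+ 2 <= quad A y) ->
  quad A x = k * (v^T *m x) 0 0 ^+ 2 ->
  A *m x = (k * (v^T *m x) 0 0) *: v.
Proof.
move=> Asym le_quad eq_quad; pose B := A - k *: (v *m v^T).
have quadB y : quad B y = quad A y - k * (v^T *m y) 0 0 ^+ 2.
  by rewrite quadBZ_mx quad_outer.
have Bsym : B^T = B.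
  by rewrite /B linearB /= linearZ /= trmx_mul trmxK Asym.
have /eqP : B *m x = 0.
  apply: psd_quad_eq0_mulmx => // [y|]; rewrite quadB ?eq_quad ?subrr //.
  by rewrite subr_ge0.
rewrite mulmxBl -scalemxAl -mulmxA {1}[v^T *m x]mx11_scalar.
rewrite mul_mx_scalar scalerA.
by rewrite subr_eq0 => /eqP.
Qed.

Lemma posdef_quad_ge0 A x : posdef A -> 0 <= quad A x.
Proof.
case=> _ Apos; have [-> | x_neq0] := eqVneq x 0; last by rewrite ltW ?Apos.
by rewrite /quad mulmx0 mxE.
Qed.

Lemma posdef_unitmx A : posdef A -> A \in unitmx.
Proof.
case=> _ Apos; rewrite unitmxE unitfE; apply/negP => /det0P [v v_neq0 vA0].
have := Apos v^T; rewrite trmx_eq0 v_neq0 /quad trmxK vA0 mul0mx mxE.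
by move=> /(_ isT); rewrite ltxx.
Qed.

Lemma quad_invmx_mulmx A x : A^T = A -> A \in unitmx ->
  quad (invmx A) (A *m x) = quad A x.
Proof. by move=> Asym Aunit; rewrite /quad trmx_mul Asym -mulmxA mulKmx. Qed.

End QuadraticForm.

Section SupportNorms.
Variables (R : realType) (n : nat) (S : {set 'I_n}).
Implicit Types (s u v x : 'cV[R]_n).

Lemma l1_out_ge0 x : 0 <= l1_out S x.
Proof. exact: sumr_ge0. Qed.

Lemma l1_outZ a x : l1_out S (a *: x) = `|a| * l1_out S x.
Proof.
by rewrite /l1_out mulr_sumr; apply: eq_bigr => j _; rewrite mxE normrM.
Qed.

Lemma dot_sum s x : (s^T *m x) 0 0 = \sum_j s j 0 * x j 0.
Proof. by rewrite mxE; apply: eq_bigr => j _; rewrite mxE. Qed.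

Lemma dot_le_l1_out s x : (forall j, j \in S -> s j 0 = 0) ->
  (forall j, `|s j 0| <= 1) -> `|(s^T *m x) 0 0| <= l1_out S x.
Proof.
move=> sS s_le1; rewrite dot_sum (bigID (mem S)) /= big1 ?add0r; last first.
  by move=> j jS; rewrite sS ?mul0r.
apply: le_trans (ler_norm_sum _ _ _) _; apply: ler_sum => j _.
by rewrite normrM ler_piMl.
Qed.

Lemma dot_eq_l1_out s x : (forall j, j \in S -> s j 0 = 0) ->
  (forall j, j \notin S -> s j 0 * x j 0 = `|x j 0|) ->
  (s^T *m x) 0 0 = l1_out S x.
Proof.
move=> sS s_sign; rewrite dot_sum (bigID (mem S)) /= big1 ?add0r; last first.
  by move=> j jS; rewrite sS ?mul0r.
exact: eq_bigr.
Qed.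

Lemma linfZ a x : linf (a *: x) = `|a| * linf x.
Proof.
have a_ge0 := normr_ge0 a.
rewrite /linf (big_morph ( *%R `|a|) (fun y z => maxr_pMr y z a_ge0) (mulr0 _)).
by apply: eq_bigr => j _; rewrite mxE normrM.
Qed.

Lemma linf_eq_linf_out u v : (forall j, j \in S -> v j 0 = 0) ->
  (forall j, j \notin S -> `|v j 0| = `|u j 0|) -> linf v = linf_out S u.
Proof.
move=> vS v_out; rewrite /linf /linf_out [RHS]bigmax_mkcond.
apply: eq_bigr => j _.
by case: ifPn => [/v_out | /negPn /vS ->]; rewrite ?normr0.
Qed.

End SupportNorms.

Lemma argmin_c0_sqr_le (R : realType) (n : nat) (Sigma W : 'M[R]_n)
    (S : {set 'I_n}) (lam : R) (c0 : 'cV[R]_n) :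
  (forall c, 0 <= quad Sigma c) -> 0 < lam -> is_argmin_c0 Sigma W S lam c0 ->
  forall c, lam ^+ 2 * quad Sigma c0 * l1_out S (W *m c) ^+ 2 <= quad Sigma c.
Proof.
move=> psd lam_gt0 [_ c0_min] c; set N := l1_out S (W *m c).
have [-> | N_neq0] := eqVneq N 0; first by rewrite expr0n mulr0.
have lamN_gt0 : 0 < lam * N by rewrite mulr_gt0 // lt_def N_neq0 l1_out_ge0.
have := c0_min ((lam * N)^-1 *: c).
rewrite -scalemxAr l1_outZ -/N gtr0_norm ?invr_gt0 // mulrCA mulVf ?gt_eqF //.
rewrite quadZ => /(_ erefl).
rewrite -(ler_pM2l (exprn_gt0 2 lamN_gt0)) mulrA -exprMn divff ?gt_eqF //.
by rewrite expr1n mul1r exprMn mulrAC.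
Qed.

Section MinimalNormDirection.
Variables (R : realType) (n : nat) (Sigma : 'M[R]_n) (S : {set 'I_n}).
Variables (lam : R) (w c0 : 'cV[R]_n).
Hypotheses (Sigma_pd : posdef Sigma) (lam_gt0 : 0 < lam).
Hypothesis w_gt0 : forall j, 0 < w j 0.
Hypothesis c0_min : is_argmin_c0 Sigma (diag_mx w^T) S lam c0.

Local Notation W := (diag_mx w^T).
Local Notation m := (quad Sigma c0).
Implicit Types (s x : 'cV[R]_n).

Lemma diag_mulmxE x j : (W *m x) j 0 = w j 0 * x j 0.
Proof. by rewrite mul_diag_mx !mxE. Qed.

Lemma quad_c0_gt0 : 0 < m.
Proof.
apply: Sigma_pd.2; apply/eqP => c0_eq0; have := c0_min.1.
rewrite c0_eq0 mulmx0 -(scale0r 0) l1_outZ normr0 mul0r mulr0.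
by move=> /esym/eqP; rewrite oner_eq0.
Qed.

Lemma Sigma_c0_subgradient s : (forall j, j \in S -> s j 0 = 0) ->
  (forall j, j \notin S -> s j 0 * c0 j 0 = `|c0 j 0|) ->
  (forall j, `|s j 0| <= 1) ->
  Sigma *m c0 = (lam * m) *: (W *m s).
Proof.
move=> sS s_sign s_le1; set v := W *m s.
have v_dot (c : 'cV[R]_n) : (v^T *m c) 0 0 = (s^T *m (W *m c)) 0 0.
  by rewrite trmx_mul tr_diag_mx mulmxA.
have dot_c0 : (v^T *m c0) 0 0 = l1_out S (W *m c0).
  rewrite v_dot; apply: dot_eq_l1_out => // j jS.
  by rewrite diag_mulmxE mulrCA s_sign // normrM gtr0_norm.
have [lamN _] := c0_min.
have quad_ge0 x : 0 <= quad Sigma x by exact: posdef_quad_ge0.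
have k_ge0 : 0 <= lam ^+ 2 * m by rewrite mulr_ge0 ?sqr_ge0.
rewrite (@quad_ge_sqr_dot_mulmx _ _ _ v _ (lam ^+ 2 * m)) ?Sigma_pd.1 //.
- by congr (_ *: _); rewrite dot_c0 -[RHS]mulr1 -lamN; ring.
- move=> c; apply: le_trans (argmin_c0_sqr_le quad_ge0 lam_gt0 c0_min c).
  rewrite ler_wpM2l // -real_normK ?num_real // ler_sqr ?nnegrE ?l1_out_ge0 //.
  by rewrite v_dot dot_le_l1_out.
- by rewrite dot_c0 mulrAC -exprMn lamN expr1n mul1r.
Qed.

Definition sign_completion (sig : R) : 'cV[R]_n :=
  \col_j (if j \in S then 0 else if c0 j 0 == 0 then sig else Num.sg (c0 j 0)).

Lemma Sigma_c0_sign_completion sig : `|sig| <= 1 ->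
  Sigma *m c0 = (lam * m) *: (W *m sign_completion sig).
Proof.
move=> sig_le1; apply: Sigma_c0_subgradient => j; rewrite mxE.
- by move=> ->.
- move=> /negbTE ->; have [-> | c0j_neq0] := eqVneq (c0 j 0) 0.
    by rewrite mulr0 normr0.
  by rewrite normrEsg.
- case: ifP => _; first by rewrite normr0.
  by case: ifP => _ //; rewrite normr_sg; case: (_ != 0).
Qed.

(* Completing by 0 and by 1 both satisfy the first-order condition, which
   therefore leaves no room for a zero coordinate of c0 off S. *)
Lemma c0_neq0_out j : j \notin S -> c0 j 0 != 0.
Proof.
move=> jS; apply/eqP => c0j_eq0.
have norm0_le1 : `|0 : R| <= 1 by rewrite normr0 ler01.
have /matrixP/(_ j 0)/eqP := Sigma_c0_sign_completion norm0_le1.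
rewrite (@Sigma_c0_sign_completion 1) ?normr1 // mxE diag_mulmxE.
rewrite [in X in _ == X]mxE diag_mulmxE !mxE (negbTE jS) c0j_eq0 eqxx.
rewrite mulr1 !mulr0.
by rewrite !mulf_eq0 !gt_eqF ?quad_c0_gt0.
Qed.

Lemma Sigma_c0_zeta : Sigma *m c0 = (lam * m) *: (W *m zeta_of S c0).
Proof.
have -> : zeta_of S c0 = sign_completion 0.
  apply/matrixP => j k; rewrite !mxE.
  by case: ifP => // _; case: eqP => // ->; rewrite sgr0.
by apply: Sigma_c0_sign_completion; rewrite normr0 ler01.
Qed.

Lemma Sigma_c0_eq0_on_S j : j \in S -> (Sigma *m c0) j 0 = 0.
Proof. by move=> jS; rewrite Sigma_c0_zeta mxE diag_mulmxE mxE jS !mulr0. Qed.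

Lemma linf_Sigma_c0 : linf (Sigma *m c0) = lam * m * linf_out S w.
Proof.
rewrite Sigma_c0_zeta linfZ gtr0_norm ?mulr_gt0 ?quad_c0_gt0 //; congr (_ * _).
apply: linf_eq_linf_out => j; rewrite diag_mulmxE mxE.
  by move=> ->; rewrite mulr0.
by move=> jS; rewrite (negbTE jS) normrM normr_sg c0_neq0_out ?mulr1.
Qed.

Lemma quad_invmx_W_zeta :
  quad (invmx Sigma) (W *m zeta_of S c0) = (lam * m)^-1 ^+ 2 * m.
Proof.
have lm_neq0 : lam * m != 0 by rewrite mulf_neq0 ?gt_eqF ?quad_c0_gt0.
have -> : W *m zeta_of S c0 = (lam * m)^-1 *: (Sigma *m c0).
  by rewrite Sigma_c0_zeta scalerA mulVf ?scale1r.
by rewrite quadZ quad_invmx_mulmx ?posdef_unitmx //; case: Sigma_pd.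
Qed.

End MinimalNormDirection.

Theorem lemma3p9 (R : realType) (n : nat) (Sigma : 'M[R]_n) (S : {set 'I_n})
    (lam : R) (w : 'cV[R]_n) (c0 : 'cV[R]_n) :
  posdef Sigma ->
  0 < lam ->
  (forall j, 0 < w j 0) ->
  linf w <= 1 ->
  is_argmin_c0 Sigma (diag_mx w^T) S lam c0 ->
  let zeta := zeta_of S c0 in
  let W := diag_mx w^T in
  (forall j, j \in S -> cov_lin_coord Sigma c0 j = 0) /\
  linf (Sigma *m c0) = linf_out S w / (lam * quad (invmx Sigma) (W *m zeta)) /\
  quad Sigma c0 = 1 / (lam ^+ 2 * quad (invmx Sigma) (W *m zeta)).
Proof.
move=> Sigma_pd lam_gt0 w_gt0 _ c0_min zeta W.
have m_gt0 := quad_c0_gt0 Sigma_pd c0_min.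
split; first exact: (Sigma_c0_eq0_on_S Sigma_pd lam_gt0 w_gt0 c0_min).
rewrite (linf_Sigma_c0 Sigma_pd lam_gt0 w_gt0 c0_min).
rewrite (quad_invmx_W_zeta Sigma_pd lam_gt0 w_gt0 c0_min).
by split; field; rewrite !gt_eqF.
Qed.
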